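(* Let $k\ge1$ and $K>0$. There is a constant $C$ (depending only on $k$ and $K$) such that for all $n$ and all $B,B'\in M_n(\mathbb C)^{\mathbb N}$ with $B_0=uv^*$, $B'_0=u'v'^*$ for some vectors $u,v,u',v'\in\mathbb C^n$ and $\|B_t\|,\|B'_t\|\le K$ for $0\le t\le k-1$, $$|\Sigma_k(B,B')-\hat\Sigma_k(B,B')|\le Cn^{-1}\quad\text{and}\quad|\Sigma'_k(B,B')-\hat\Sigma'_k(B,B')|\le Cn^{-1}.$$
   Context: Let $\rho\in[0,1]$. $\|\cdot\|$ is the operator norm. $P_k$ is the set of $\pi=(j_1,i_1,\dots,j_k,i_k)\in\{1,\dots,n\}^{2k}$ with convention $i_0=i_k$; $M_\pi(B)=n^{-(k-1)/2}\prod_{t=0}^{k-1}(B_t)_{i_tj_{t+1}}$; $Q_k\subset P_k$ is the set of $\pi$ such that the pairs $(j_t,i_t)$, $1\le t\le k$, are pairwise distinct. $\Sigma_k(B,B')=n^{-k+1}\prod_{t=0}^{k-1}\operatorname{Tr}(B_tB_t'^* )$, $\Sigma'_k(B,B')=\rho^kn^{-k+1}\prod_{t=0}^{k-1}\operatorname{Tr}(B_tB_t'^\intercal)$, $\hat\Sigma_k(B,B')=\sum_{\pi\in Q_k}M_\pi(B)\overline{M_\pi(B')}$, $\hat\Sigma'_k(B,B')=\rho^k\sum_{\pi\in Q_k}M_\pi(B)M_\pi(B')$. *)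

From HB Require Import structures.
From mathcomp Require Import all_boot all_order all_algebra.
From mathcomp Require Import complex.
From mathcomp Require Import reals.
Set Implicit Arguments. Unset Strict Implicit. Unset Printing Implicit Defensive.
Import Order.TTheory GRing.Theory Num.Theory.
Local Open Scope ring_scope.

Section Defs.
Variable R : rcfType.
Local Notation C := R[i].
Local Notation normc := ComplexField.Normc.normc.

Definition adjmx m p (A : 'M[C]_(m, p)) : 'M[C]_(p, m) := (map_mx Num.conj A)^T.

Definition vnorm n (x : 'cV[C]_n) : R := Num.sqrt (\sum_i normc (x i 0) ^+ 2).

Definition opnorm_le n (A : 'M[C]_n) (K : R) : Prop :=
  forall x : 'cV[C]_n, vnorm (A *m x) <= K * vnorm x.

(* An element pi = (j_1,i_1,...,j_k,i_k) of P_k is encoded as p : 'I_k -> 'I_n * 'I_n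
   with p t = (j_{t+1}, i_{t+1}) for t = 0..k-1.  With the convention i_0 = i_k,
   i_t = (p (ord_pred t)).2 and j_{t+1} = (p t).1 for t : 'I_k. *)
Definition Pk k n := {ffun 'I_k -> 'I_n * 'I_n}.

Definition inQk k n (p : Pk k n) : bool := injectiveb p.

Definition Mpi k n (p : Pk k n) (B : nat -> 'M[C]_n) : C :=
  real_complex R ((Num.sqrt (n%:R : R)) ^- (k.-1)) *
  \prod_(t < k) B t (p (ord_pred t)).2 (p t).1.

Definition Sigma k n (B B' : nat -> 'M[C]_n) : C :=
  ((n%:R : C) ^- (k.-1)) * \prod_(t < k) \tr (B t *m adjmx (B' t)).

Definition Sigma' (rho : R) k n (B B' : nat -> 'M[C]_n) : C :=
  real_complex R (rho ^+ k) * ((n%:R : C) ^- (k.-1)) * \prod_(t < k) \tr (B t *m (B' t)^T).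

Definition hSigma k n (B B' : nat -> 'M[C]_n) : C :=
  \sum_(p : Pk k n | inQk p) Mpi p B * Num.conj (Mpi p B').

Definition hSigma' (rho : R) k n (B B' : nat -> 'M[C]_n) : C :=
  real_complex R (rho ^+ k) * \sum_(p : Pk k n | inQk p) Mpi p B * Mpi p B'.

End Defs.

(* Expanding the traces, Sigma_k(B,B') is n^(1-k) times the sum over all of P_k of
   prod_t (B_t)_{i_t j_(t+1)} conj (B'_t)_{i_t j_(t+1)}, so Sigma_k - hSigma_k is the same
   sum over P_k \ Q_k (and similarly for Sigma'_k).  A non-injective pi has j_s = j_t for
   some s <> t, and the sum over such pi factorises into a column sum of h_s and of h_t at the
   common column times the total masses of the other h_r, where the entrywise majorant
   h_t = (|B_t|^2 + |B'_t|^2) / 2 comes from AM-GM.  Column sums of h_t are at most K^2 by the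
   operator norm bound, the total mass of h_0 is at most K^2 because a rank-one matrix has
   Hilbert-Schmidt norm equal to its operator norm, and the other total masses are at most
   n K^2.  Each of the k^2 constraints j_s = j_t thus costs K^(2k) n^(k-2), which is
   K^(2k) / n after the normalisation n^(1-k). *)

From HB Require Import structures.
From mathcomp Require Import all_boot all_order all_algebra.
From mathcomp Require Import complex.
From mathcomp Require Import reals.
From mathcomp Require Import lra.
Import Order.TTheory GRing.Theory Num.Theory.
Set Implicit Arguments. Unset Strict Implicit. Unset Printing Implicit Defensive.
Notation normc := ComplexField.Normc.normc.
Local Open Scope ring_scope.

Definition cycle_prod (T : comPzSemiRingType) k n (f : 'I_k -> 'I_n -> 'I_n -> T)
    (p : Pk k n) : T :=
  \prod_(t < k) f t (p (ord_pred t)).2 (p t).1.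

Section CycleSums.
Variables (T : comPzSemiRingType) (k n : nat).
Implicit Types (f : 'I_k -> 'I_n -> 'I_n -> T) (p : Pk k n).

Lemma sum_cycle_prod f :
  \sum_(p : Pk k n) cycle_prod f p = \prod_(t < k) \sum_a \sum_b f t a b.
Proof.
under [RHS]eq_bigr do rewrite pair_bigA.
rewrite bigA_distr_bigA /=.
(* [shift] pairs i_t with j_(t+1), which makes the summand a product of independent factors. *)
pose shift p : Pk k n := [ffun t => ((p (ord_pred t)).2, (p t).1)].
pose unshift p : Pk k n := [ffun t => ((p t).2, (p (ordS t)).1)].
symmetry; rewrite (reindex shift) /=.
  by apply: eq_bigr => p _; apply: eq_bigr => t _; rewrite ffunE.
exists unshift => p _; apply/ffunP => t; rewrite !ffunE ?ordSK ?ord_predK.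
all: by case: (p t).
Qed.

Lemma sum_cycle_prod_col_eq f (s t : 'I_k) : s != t ->
  \sum_(p : Pk k n | (p s).1 == (p t).1) cycle_prod f p =
  \sum_y ((\sum_a f s a y) * (\sum_a f t a y) *
          \prod_(r | (r != s) && (r != t)) \sum_a \sum_b f r a b).
Proof.
move=> st.
pose g y r a b := if ((r == s) || (r == t)) && (b != y) then 0 else f r a b.
have g_col y r a : \sum_b g y r a b = if (r == s) || (r == t) then f r a y
                                    else \sum_b f r a b.
  rewrite /g; case: ifP => //= _.
  under eq_bigr do rewrite if_neg.
  by rewrite -big_mkcond big_pred1_eq.
transitivity (\sum_y \sum_(p : Pk k n) cycle_prod (g y) p); last first.
  apply: eq_bigr => y _; rewrite sum_cycle_prod.
  rewrite (bigD1 s) // (bigD1 t) /=; last by rewrite eq_sym.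
  rewrite mulrA; congr (_ * _ * _).
  - by apply: eq_bigr => a _; rewrite g_col eqxx.
  - by apply: eq_bigr => a _; rewrite g_col eqxx orbT.
  - apply: eq_bigr => r /andP[rs rt]; apply: eq_bigr => a _.
    by rewrite g_col (negbTE rs) (negbTE rt).
rewrite exchange_big big_mkcond /=; apply: eq_bigr => p _.
rewrite (bigD1 (p s).1) //= big1 => [|y ys].
  rewrite addr0 /cycle_prod; case: eqP => [ts|/eqP ts].
    apply: eq_bigr => r _; rewrite /g; case: ifP => // /andP[/orP[] /eqP-> ].
      by rewrite eqxx.
    by rewrite ts eqxx.
  by rewrite /cycle_prod (bigD1 t) //= {1}/g eqxx orbT eq_sym ts mul0r.
by rewrite /cycle_prod (bigD1 s) //= {1}/g eqxx /= eq_sym ys mul0r.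
Qed.

End CycleSums.

Lemma ler_sum_term (R : numDomainType) (I : finType) (P : pred I) (F : I -> R) i :
  P i -> (forall j, P j -> 0 <= F j) -> F i <= \sum_(j | P j) F j.
Proof.
move=> Pi F_ge0; rewrite (bigD1 i) //= lerDl.
by apply: sumr_ge0 => j /andP[/F_ge0].
Qed.

Lemma prod_if_eq (T : comPzSemiRingType) (I : finType) (i0 : I) (a b : T) :
  \prod_(i : I) (if i == i0 then a else b) = a * b ^+ #|I|.-1.
Proof.
rewrite (bigD1 i0) //= eqxx (eq_bigr (fun=> b)) => [|i /negPf-> //].
by rewrite prodr_const cardC1.
Qed.

Lemma sum_noninjective_le (R : numDomainType) k n (X : Pk k n -> R) :
  (forall p, 0 <= X p) ->
  \sum_(p : Pk k n | ~~ inQk p) X p <=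
  \sum_s \sum_(t | t != s) \sum_(p : Pk k n | (p s).1 == (p t).1) X p.
Proof.
move=> X_ge0.
pose Y (p : Pk k n) (s t : 'I_k) := if (p s).1 == (p t).1 then X p else 0.
have Y_ge0 p s t : 0 <= Y p s t by rewrite /Y; case: ifP.
have -> : \sum_s \sum_(t | t != s) \sum_(p : Pk k n | (p s).1 == (p t).1) X p =
          \sum_(p : Pk k n) \sum_s \sum_(t | t != s) Y p s t.
  rewrite exchange_big; apply: eq_bigr => s _.
  by rewrite exchange_big; apply: eq_bigr => t _; rewrite big_mkcond.
rewrite [leLHS]big_mkcond; apply: ler_sum => p _.
case: ifPn => [/injectivePn[s [t st pst]]|_]; last first.
  by apply: sumr_ge0 => s _; apply: sumr_ge0.
have -> : X p = Y p s t by rewrite /Y pst eqxx.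
apply: le_trans (ler_sum_term (P := xpredT) (i := s) _ _) => [|//|s' _].
  by apply: ler_sum_term; rewrite // eq_sym.
exact: sumr_ge0.
Qed.

Section CycleBounds.
Variables (R : realFieldType) (k n : nat).
Variables (h : 'I_k -> 'I_n -> 'I_n -> R) (L : R) (r0 : 'I_k).
Hypotheses (h_ge0 : forall t a b, 0 <= h t a b) (L_ge0 : 0 <= L).
Hypotheses (h_col : forall t b, \sum_a h t a b <= L)
           (h_r0 : \sum_a \sum_b h r0 a b <= L).

(* [beta r] bounds the total mass of [h r]; in a constraint j_s = j_t, an index other than
   [r0] trades its factor [n] for the column bound [L]. *)
Let beta r := if r == r0 then L else n%:R * L.

Let prod_beta : \prod_r beta r = L ^+ k * n%:R ^+ k.-1.
Proof.
have k_gt0 : (0 < k)%N by apply: leq_ltn_trans (ltn_ord r0).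
by rewrite prod_if_eq card_ord exprMn mulrCA -exprS prednK // mulrC.
Qed.

Let sum_le_beta r : \sum_a \sum_b h r a b <= beta r.
Proof.
rewrite /beta; case: eqP => [-> //|_].
rewrite exchange_big mulr_natl -[n in L *+ n]card_ord -sumr_const.
exact: ler_sum.
Qed.

Lemma pair_cycle_sum_le s t : s != t ->
  n%:R * \sum_(p : Pk k n | (p s).1 == (p t).1) cycle_prod h p <=
  L ^+ k * n%:R ^+ k.-1.
Proof.
wlog t_r0 : s t / t != r0 => [wlog st|st].
  have [tr0|tr0] := eqVneq t r0; last exact: wlog.
  rewrite (eq_bigl (fun p : Pk k n => (p t).1 == (p s).1)) => [|p]; last exact: eq_sym.
  by apply: wlog; [rewrite -tr0 | rewrite eq_sym].
rewrite sum_cycle_prod_col_eq // -prod_beta [in leRHS](bigD1 s) //.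
rewrite [in leRHS](bigD1 t) /=; last by rewrite eq_sym.
have sums_ge0 r : 0 <= \sum_a \sum_b h r a b.
  by apply: sumr_ge0 => a _; apply: sumr_ge0.
have cols : \sum_y (\sum_a h s a y) * (\sum_a h t a y) <= (\sum_a \sum_b h s a b) * L.
  rewrite exchange_big mulr_suml; apply: ler_sum => y _.
  by apply: ler_wpM2l; [apply: sumr_ge0 | apply: h_col].
rewrite -mulr_suml !mulrA; apply: ler_pM.
- by rewrite mulr_ge0 // sumr_ge0 // => y _; rewrite mulr_ge0 ?sumr_ge0.
- exact: prodr_ge0.
- apply: le_trans (ler_wpM2l (ler0n _ _) cols) _.
  rewrite mulrCA {2}/beta (negbTE t_r0).
  by apply: ler_wpM2r; rewrite ?mulr_ge0 ?sum_le_beta.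
- by apply: ler_prod => r _; rewrite sums_ge0 sum_le_beta.
Qed.

Lemma noninjective_cycle_sum_le :
  n%:R * \sum_(p : Pk k n | ~~ inQk p) cycle_prod h p <=
  (k * k)%:R * (L ^+ k * n%:R ^+ k.-1).
Proof.
have cp_ge0 p : 0 <= cycle_prod h p by apply: prodr_ge0.
apply: le_trans (ler_wpM2l (ler0n _ _) (sum_noninjective_le cp_ge0)) _.
set D := L ^+ k * n%:R ^+ k.-1.
have -> : (k * k)%:R * D = \sum_(s < k) \sum_(t < k) D.
  by rewrite !sumr_const card_ord -mulrnA mulr_natl.
rewrite mulr_sumr; apply: ler_sum => s _; rewrite mulr_sumr.
apply: le_trans (_ : _ <= \sum_(t | t != s) D) _.
  by apply: ler_sum => t ts; apply: pair_cycle_sum_le; rewrite eq_sym.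
rewrite [leRHS](bigID (fun t => t != s)) /= lerDl.
by apply: sumr_ge0 => t _; rewrite mulr_ge0 ?exprn_ge0.
Qed.

End CycleBounds.

Section ComplexNorm.
Variable R : rcfType.
Local Open Scope complex_scope.
Implicit Types x y : R[i].

Lemma normcE x : `|x| = (normc x)%:C.
Proof. by []. Qed.

Lemma normc_ge0 x : 0 <= normc x.
Proof. by case: x => a b; rewrite /= sqrtr_ge0. Qed.

Lemma normc_conj x : normc (Num.conj x) = normc x.
Proof. by apply: complexI; rewrite -!normcE norm_conjC. Qed.

Lemma normc_real (r : R) : normc r%:C = `|r|.
Proof. by rewrite /= expr0n /= addr0 sqrtr_sqr. Qed.

Lemma conj_real (r : R) : Num.conj r%:C = r%:C.
Proof. exact: conjc_real. Qed.

Lemma mul_conj_normc x : Num.conj x * x = (normc x ^+ 2)%:C.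
Proof. by rewrite -normCKC normcE rmorphXn. Qed.

Lemma normc_sum (I : finType) (P : pred I) (F : I -> R[i]) :
  normc (\sum_(i | P i) F i) <= \sum_(i | P i) normc (F i).
Proof.
elim/big_rec2: _ => [|i y1 y2 _ IH]; first by rewrite normc_real normr0.
by apply: le_trans (le_normcD _ _) _; rewrite lerD2l.
Qed.

Lemma normc_prod (I : finType) (P : pred I) (F : I -> R[i]) :
  normc (\prod_(i | P i) F i) = \prod_(i | P i) normc (F i).
Proof.
elim/big_rec2: _ => [|i y1 y2 _ IH]; first by rewrite normc_real normr1.
by rewrite ComplexField.Normc.normcM IH.
Qed.

Lemma normc_mul_le x y : normc x * normc y <= (normc x ^+ 2 + normc y ^+ 2) / 2.
Proof. have := sqr_ge0 (normc x - normc y); rewrite sqrrB; lra. Qed.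

End ComplexNorm.

Section VectorNorm.
Variables (R : rcfType) (n : nat).
Local Open Scope complex_scope.
Implicit Types (x u v : 'cV[R[i]]_n) (A : 'M[R[i]]_n).

Lemma vnorm_ge0 x : 0 <= vnorm x.
Proof. exact: sqrtr_ge0. Qed.

Lemma vnorm_sqr x : vnorm x ^+ 2 = \sum_i normc (x i 0) ^+ 2.
Proof. by rewrite sqr_sqrtr // sumr_ge0 // => i _; rewrite sqr_ge0. Qed.

Lemma vnormZ (c : R[i]) x : vnorm (c *: x) = normc c * vnorm x.
Proof.
rewrite /vnorm -[normc c]ger0_norm ?normc_ge0 // -sqrtr_sqr -sqrtrM ?sqr_ge0 //.
rewrite mulr_sumr; congr Num.sqrt; apply: eq_bigr => i _.
by rewrite mxE ComplexField.Normc.normcM exprMn.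
Qed.

Lemma vnorm_delta (b : 'I_n) : vnorm (delta_mx b 0 : 'cV[R[i]]_n) = 1.
Proof.
rewrite /vnorm (bigD1 b) //= big1 => [|i /negPf ib]; last first.
  by rewrite mxE ib /= expr0n addr0 sqrtr0 expr0n.
by rewrite mxE !eqxx /= expr1n expr0n !addr0 sqrtr1 expr1n sqrtr1.
Qed.

Lemma adjmx_mul_self v : adjmx v *m v = ((vnorm v ^+ 2)%:C)%:M.
Proof.
apply/matrixP => i j; rewrite !ord1 !mxE vnorm_sqr rmorph_sum /=.
by apply: eq_bigr => b _; rewrite !mxE mul_conj_normc.
Qed.

Lemma opnorm_col_sqr_le A K (b : 'I_n) : opnorm_le A K ->
  \sum_a normc (A a b) ^+ 2 <= K ^+ 2.
Proof.
move/(_ (delta_mx b 0)); rewrite -colE vnorm_delta mulr1 => AbK.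
have := vnorm_sqr (col b A); under eq_bigr do rewrite mxE; move=> <-.
by rewrite !expr2 ler_pM ?vnorm_ge0.
Qed.

Lemma rank_one_sqr u v :
  \sum_a \sum_b normc ((u *m adjmx v) a b) ^+ 2 = (vnorm u * vnorm v) ^+ 2.
Proof.
rewrite exprMn !vnorm_sqr mulr_suml; apply: eq_bigr => a _.
rewrite mulr_sumr; apply: eq_bigr => b _.
by rewrite !mxE big_ord1 !mxE ComplexField.Normc.normcM normc_conj exprMn.
Qed.

Lemma opnorm_rank_one_le u v K : 0 <= K -> opnorm_le (u *m adjmx v) K ->
  vnorm u * vnorm v <= K.
Proof.
move=> K_ge0 /(_ v); rewrite -mulmxA adjmx_mul_self mul_mx_scalar vnormZ.
rewrite normc_real ger0_norm; last exact: sqr_ge0.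
have [->|v_neq0] := eqVneq (vnorm v) 0; first by rewrite !mulr0.
have v_gt0 : 0 < vnorm v by rewrite lt_def v_neq0 vnorm_ge0.
by rewrite expr2 mulrAC ler_pM2r // mulrC.
Qed.

Lemma rank_one_sqr_le u v K : 0 <= K -> opnorm_le (u *m adjmx v) K ->
  \sum_a \sum_b normc ((u *m adjmx v) a b) ^+ 2 <= K ^+ 2.
Proof.
move=> K_ge0 /(opnorm_rank_one_le K_ge0) uvK.
by rewrite rank_one_sqr !expr2 ler_pM ?mulr_ge0 ?vnorm_ge0.
Qed.

End VectorNorm.

Section SigmaFormulas.
Variables (R : rcfType) (k n : nat).
Local Open Scope complex_scope.
Implicit Types (p : Pk k n).

Lemma mxtrace_mul_adjmx (A A' : 'M[R[i]]_n) :
  \tr (A *m adjmx A') = \sum_a \sum_b A a b * Num.conj (A' a b).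
Proof. by apply: eq_bigr => a _; rewrite mxE; apply: eq_bigr => b _; rewrite !mxE. Qed.

Lemma mxtrace_mul_tr (A A' : 'M[R[i]]_n) :
  \tr (A *m A'^T) = \sum_a \sum_b A a b * A' a b.
Proof. by apply: eq_bigr => a _; rewrite mxE; apply: eq_bigr => b _; rewrite !mxE. Qed.

Local Notation scale := ((n%:R : R) ^- k.-1)%:C.

Let scaleE : (n%:R : R[i]) ^- k.-1 = scale.
Proof. by rewrite fmorphV rmorphXn rmorph_nat. Qed.

Let sqr_Mpi_scale :
  (Num.sqrt (n%:R : R) ^- k.-1)%:C * (Num.sqrt (n%:R : R) ^- k.-1)%:C = scale.
Proof. by rewrite -rmorphM -invfM -exprMn -expr2 sqr_sqrtr. Qed.

Lemma Mpi_mul p (B B' : nat -> 'M[R[i]]_n) :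
  Mpi p B * Mpi p B' = scale * cycle_prod (fun t a b => B t a b * B' t a b) p.
Proof. by rewrite /Mpi mulrACA sqr_Mpi_scale -big_split. Qed.

Lemma Mpi_mul_conj p (B B' : nat -> 'M[R[i]]_n) :
  Mpi p B * Num.conj (Mpi p B') =
  scale * cycle_prod (fun t a b => B t a b * Num.conj (B' t a b)) p.
Proof.
by rewrite /Mpi rmorphM rmorph_prod /= conj_real mulrACA sqr_Mpi_scale -big_split.
Qed.

Lemma Sigma_sub_hSigma (B B' : nat -> 'M[R[i]]_n) :
  Sigma k B B' - hSigma k B B' =
  scale * (\prod_(t < k) \sum_a \sum_b B t a b * Num.conj (B' t a b) -
           \sum_(p : Pk k n | inQk p)
             cycle_prod (fun t a b => B t a b * Num.conj (B' t a b)) p).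
Proof.
rewrite /Sigma /hSigma scaleE mulrBr mulr_sumr; congr (_ * _ - _).
  by apply: eq_bigr => t _; rewrite mxtrace_mul_adjmx.
by apply: eq_bigr => p _; rewrite Mpi_mul_conj.
Qed.

Lemma Sigma'_sub_hSigma' (rho : R) (B B' : nat -> 'M[R[i]]_n) :
  Sigma' rho k B B' - hSigma' rho k B B' = (rho ^+ k)%:C *
  (scale * (\prod_(t < k) \sum_a \sum_b B t a b * B' t a b -
            \sum_(p : Pk k n | inQk p) cycle_prod (fun t a b => B t a b * B' t a b) p)).
Proof.
rewrite /Sigma' /hSigma' scaleE -mulrA -mulrBr; congr (_ * _).
rewrite mulrBr mulr_sumr; congr (_ * _ - _).
  by apply: eq_bigr => t _; rewrite mxtrace_mul_tr.
by apply: eq_bigr => p _; rewrite Mpi_mul.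
Qed.

End SigmaFormulas.

Section CycleEstimate.
Variables (R : rcfType) (k n : nat) (f : 'I_k -> 'I_n -> 'I_n -> R[i]).
Local Open Scope complex_scope.

Lemma normc_cycle_error_le :
  normc (\prod_(t < k) \sum_a \sum_b f t a b - \sum_(p : Pk k n | inQk p) cycle_prod f p)
  <= \sum_(p : Pk k n | ~~ inQk p) cycle_prod (fun t a b => normc (f t a b)) p.
Proof.
rewrite -sum_cycle_prod (bigID (fun p => inQk p)) /= addrC addrK.
apply: le_trans (normc_sum _ _) _; apply: ler_sum => p _.
by rewrite normc_prod.
Qed.

Lemma scaled_cycle_error_le (h : 'I_k -> 'I_n -> 'I_n -> R) (L : R) (r0 : 'I_k) :
  0 <= L -> (forall t a b, normc (f t a b) <= h t a b) ->
  (forall t b, \sum_a h t a b <= L) -> \sum_a \sum_b h r0 a b <= L ->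
  normc (((n%:R : R) ^- k.-1)%:C *
         (\prod_(t < k) \sum_a \sum_b f t a b - \sum_(p : Pk k n | inQk p) cycle_prod f p))
  <= (k * k)%:R * L ^+ k / n%:R.
Proof.
move=> L_ge0 f_le_h h_col h_r0.
have h_ge0 t a b : 0 <= h t a b := le_trans (normc_ge0 _) (f_le_h t a b).
set S := \sum_(p : Pk k n | ~~ inQk p) cycle_prod h p.
have S_ge0 : 0 <= S by apply: sumr_ge0 => p _; apply: prodr_ge0.
have error_le_S : normc (\prod_(t < k) \sum_a \sum_b f t a b -
                         \sum_(p : Pk k n | inQk p) cycle_prod f p) <= S.
  apply: le_trans normc_cycle_error_le _; apply: ler_sum => p _.
  by apply: ler_prod => t _; rewrite normc_ge0 f_le_h.
rewrite ComplexField.Normc.normcM normc_real ger0_norm ?invr_ge0 ?exprn_ge0 //.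
apply: le_trans (ler_wpM2l _ error_le_S) _; first by rewrite invr_ge0 exprn_ge0.
(* For n = 0 the sum over P_k is empty (k > 0 because of r0), and x / 0 = 0 on the right. *)
have [n0|n_gt0] := posnP n.
  have -> : S = 0.
    by rewrite /S big1 // => p _; exfalso; move: (p r0).1; rewrite n0 => -[].
  by rewrite n0 mulr0 invr0 mulr0.
have nk_gt0 : 0 < (n%:R : R) ^+ k.-1 by rewrite exprn_gt0 ?ltr0n.
rewrite mulrC ler_pdivrMr // mulrAC ler_pdivlMr ?ltr0n // mulrC -mulrA.
exact: noninjective_cycle_sum_le h_ge0 L_ge0 h_col h_r0.
Qed.

End CycleEstimate.

Theorem lemma6p4 (R : realType) (k : nat) (K : R) :
  (1 <= k)%N -> 0 < K ->
  exists C : R, forall (rho : R), 0 <= rho <= 1 ->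
  forall (n : nat) (B B' : nat -> 'M[R[i]]_n) (u v u' v' : 'cV[R[i]]_n),
    B 0%N = u *m adjmx v -> B' 0%N = u' *m adjmx v' ->
    (forall t : nat, (t <= k.-1)%N -> opnorm_le (B t) K /\ opnorm_le (B' t) K) ->
    normc (Sigma k B B' - hSigma k B B') <= C / n%:R /\
    normc (Sigma' rho k B B' - hSigma' rho k B B') <= C / n%:R.
Proof.
move=> k_gt0 K_gt0; exists ((k * k)%:R * (K ^+ 2) ^+ k).
move=> rho /andP[rho_ge0 rho_le1] n B B' u v u' v' B0 B'0 opB.
have opBt (t : 'I_k) : opnorm_le (B t) K /\ opnorm_le (B' t) K.
  by apply: opB; rewrite -ltnS prednK.
pose r0 : 'I_k := Ordinal k_gt0.
pose h (t : 'I_k) (a b : 'I_n) := (normc (B t a b) ^+ 2 + normc (B' t a b) ^+ 2) / 2.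
have h_col t b : \sum_a h t a b <= K ^+ 2.
  have [/(opnorm_col_sqr_le b) + /(opnorm_col_sqr_le b)] := opBt t.
  rewrite -mulr_suml big_split /=; lra.
have h_r0 : \sum_a \sum_b h r0 a b <= K ^+ 2.
  have [] : opnorm_le (u *m adjmx v) K /\ opnorm_le (u' *m adjmx v') K.
    by rewrite -B0 -B'0; exact: opBt r0.
  move=> /(rank_one_sqr_le (ltW K_gt0)) uv /(rank_one_sqr_le (ltW K_gt0)) u'v'.
  rewrite /h; have -> : B r0 = u *m adjmx v := B0.
  have -> : B' r0 = u' *m adjmx v' := B'0.
  under eq_bigr do rewrite -mulr_suml big_split /=.
  rewrite -mulr_suml big_split /=; lra.
have K2_ge0 : 0 <= K ^+ 2 by rewrite sqr_ge0.
split.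
  rewrite Sigma_sub_hSigma; apply: (scaled_cycle_error_le K2_ge0 _ h_col h_r0).
  by move=> t a b; rewrite ComplexField.Normc.normcM normc_conj normc_mul_le.
rewrite Sigma'_sub_hSigma' ComplexField.Normc.normcM normc_real ger0_norm ?exprn_ge0 //.
apply: le_trans (ler_wpM2r (normc_ge0 _) (exprn_ile1 _ rho_ge0 rho_le1)) _.
rewrite mul1r; apply: (scaled_cycle_error_le K2_ge0 _ h_col h_r0).
by move=> t a b; rewrite ComplexField.Normc.normcM normc_mul_le.
Qed.
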